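(* If a series $\sum u_n$ of fuzzy numbers is $E_p$ summable to a fuzzy number $\nu$ and $\sqrt{n}\,D(u_n,\bar{0})=O(1)$, then $\sum u_n\in bs(F)$, i.e. the sequence of partial sums $s_n=\sum_{k=0}^n u_k$ is bounded.
   Context: $E^1$ denotes the space of fuzzy numbers (normal, fuzzy convex, upper semi-continuous fuzzy sets on $\mathbb{R}$ with compact support), with addition and scalar multiplication defined levelwise on $\alpha$-level sets $[u]_\alpha=[u^-_\alpha,u^+_\alpha]$, and metric $D(u,v)=\sup_{\alpha\in[0,1]}\max\{|u^-_\alpha-v^-_\alpha|,|u^+_\alpha-v^+_\alpha|\}$; $\bar{0}$ is the fuzzy number equal to $1$ at $0$ and $0$ elsewhere. For $p>0$, a sequence $(s_n)$ of fuzzy numbers has Euler means $t^p_n=\frac{1}{(p+1)^n}\sum_{k=0}^n\binom{n}{k}p^{n-k}s_k$, and is $E_p$ summable to $\nu$ if $D(t^p_n,\nu)\to 0$. A series $\sum u_n$ of fuzzy numbers is $E_p$ summable to $\nu$ if its sequence of partial sums $s_n=\sum_{k=0}^n u_k$ is $E_p$ summable to $\nu$. $bs(F)$ is the set of series of fuzzy numbers whose partial sums are bounded, i.e. there is $M>0$ with $D(s_n,\bar{0})<M$ for all $n$. *)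

From HB Require Import structures.
From mathcomp Require Import all_boot all_order all_algebra.
From mathcomp Require Import all_classical all_reals all_analysis.
Set Implicit Arguments. Unset Strict Implicit. Unset Printing Implicit Defensive.
Import Order.TTheory GRing.Theory Num.Theory.
Import numFieldNormedType.Exports.
Local Open Scope classical_set_scope.
Local Open Scope ring_scope.

Definition level {R : realType} (u : R -> R) (a : R) : set R :=
  if a == 0 then closure [set x | 0 < u x] else [set x | a <= u x].

(* E^1: normal, fuzzy convex, upper semicontinuous, compact support,
   values in [0,1]. *)
Definition is_fuzzy_number {R : realType} (u : R -> R) : Prop :=
  [/\ (forall x, 0 <= u x <= 1),
      (exists x, u x = 1),
      (forall x y l, 0 <= l <= 1 ->
          Num.min (u x) (u y) <= u (l * x + (1 - l) * y)),
      (forall a, closed [set x | a <= u x]) &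
      compact (closure [set x | 0 < u x])].

Definition lo {R : realType} (u : R -> R) (a : R) : R := inf (level u a).
Definition hi {R : realType} (u : R -> R) (a : R) : R := sup (level u a).

Definition fdist {R : realType} (u v : R -> R) : R :=
  sup [set d | exists2 a, 0 <= a <= 1 &
        d = Num.max `|lo u a - lo v a| `|hi u a - hi v a|].

Definition msum {R : realType} (A B : set R) : set R :=
  [set x | exists a b, [/\ A a, B b & x = a + b]].
Definition mscale {R : realType} (c : R) (A : set R) : set R :=
  [set x | exists2 a, A a & x = c * a].

(* levelwise operations: the fuzzy set whose a-level sets (0 < a <= 1) are
   [u]_a + [v]_a (resp. c [u]_a); membership value = sup of such a (0 if none). *)
Definition fadd {R : realType} (u v : R -> R) : R -> R :=
  fun x => sup [set a | 0 < a <= 1 /\ msum (level u a) (level v a) x].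
Definition fscale {R : realType} (c : R) (u : R -> R) : R -> R :=
  fun x => sup [set a | 0 < a <= 1 /\ mscale c (level u a) x].

Definition fzero {R : realType} : R -> R := fun x => if x == 0 then 1 else 0.

Definition psum {R : realType} (u : nat -> R -> R) (n : nat) : R -> R :=
  \big[fadd/fzero]_(k < n.+1) u k.

Definition euler_mean {R : realType} (p : R) (s : nat -> R -> R) (n : nat)
  : R -> R :=
  \big[fadd/fzero]_(k < n.+1)
     fscale ('C(n, k)%:R * p ^+ (n - k) / (p + 1) ^+ n) (s k).

Definition Ep_summable_seq {R : realType} (p : R) (s : nat -> R -> R)
  (nu : R -> R) : Prop :=
  fdist (euler_mean p s n) nu @[n --> \oo] --> 0.

Definition Ep_summable_series {R : realType} (p : R) (u : nat -> R -> R)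
  (nu : R -> R) : Prop := Ep_summable_seq p (psum u) nu.

Definition in_bs {R : realType} (u : nat -> R -> R) : Prop :=
  exists2 M : R, 0 < M & forall n, fdist (psum u n) fzero < M.

(* For 0 < a <= 1 the level set [w]_a of a fuzzy number is the interval
   [lo w a, hi w a]; levelwise addition and positive scaling act on these
   endpoints by the corresponding real operations, and D dominates every
   difference of endpoints.  At each level a, the endpoints of the partial sums
   and of their Euler means are therefore the partial sums s_m and the Euler
   means t_n of the real sequences lo (u k) a and hi (u k) a, and the theorem
   reduces to a Tauberian estimate for real sequences, uniform in a.  If
   sqrt k |x_k| <= M then |s_m - s_k| <= M (1 + (k - m)^2 / m); the Euler
   weights of t_n are the Binomial(n, 1/(p+1)) probabilities, whose second
   moment about m is at most m + 1 when n = floor (m (p + 1)).  Hence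
   |s_m - t_n| <= 3 M, and s_m stays bounded because t_n does. *)

From HB Require Import structures.
From mathcomp Require Import all_boot all_order all_algebra.
From mathcomp Require Import all_classical all_reals all_analysis.
From mathcomp Require Import lra ring.
Set Implicit Arguments. Unset Strict Implicit. Unset Printing Implicit Defensive.
Import Order.TTheory GRing.Theory Num.Theory.
Import numFieldNormedType.Exports.
Local Open Scope classical_set_scope.
Local Open Scope ring_scope.

Section fuzzy_endpoints.
Variable R : realType.
Implicit Types (S : set R) (L U u v w : R -> R).

Lemma inf_sup_itvcc S (l r : R) : l <= r -> (forall x, S x <-> l <= x <= r) ->
  inf S = l /\ sup S = r.
Proof.
move=> lr HS; have -> : S = `[l, r]%classic.
  by apply/seteqP; split=> x /=; rewrite in_itv /= => /HS.
by rewrite inf_itvcc // sup_itvcc.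
Qed.

Lemma closure_inf S : S !=set0 -> has_lbound S -> closure S (inf S).
Proof.
move=> S0 lS B /nbhs_ballP [e e0 eB].
have [y Sy ye] := inf_adherent e0 (conj S0 lS).
exists y; split => //; apply: eB; rewrite /ball /= distrC ger0_norm.
  by rewrite ltrBlDl; lra.
by rewrite subr_ge0; exact: ge_inf lS _ Sy.
Qed.

Lemma level_gt0E w a : 0 < a -> level w a = [set x | a <= w x].
Proof. by move=> a0; rewrite /level gt_eqF. Qed.

Definition level_intervals w :=
  forall a, 0 < a <= 1 -> forall x, a <= w x <-> lo w a <= x <= hi w a.

(* The third clause is the left continuity of L and U at every level. *)
Definition endpoint_family L U :=
  [/\ forall a, 0 < a <= 1 -> L a <= U a,
      forall a b, 0 < a -> a <= b -> b <= 1 -> L a <= L b /\ U b <= U a,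
      forall a, 0 < a <= 1 -> forall e, 0 < e -> exists b,
        [/\ 0 < b, b < a, L a - e < L b & U b < U a + e] &
      exists B, forall a, 0 < a <= 1 -> `|L a| <= B /\ `|U a| <= B].

(* Unlike [is_fuzzy_number], this description of fuzzy numbers is visibly
   stable under the levelwise operations. *)
Definition fuzzy_interval w := level_intervals w /\ endpoint_family (lo w) (hi w).

Definition fuzzy_of_endpoints L U : R -> R :=
  fun x => sup [set b | 0 < b <= 1 /\ L b <= x <= U b].

Lemma endpoint_familyD L1 U1 L2 U2 :
  endpoint_family L1 U1 -> endpoint_family L2 U2 ->
  endpoint_family (fun a => L1 a + L2 a) (fun a => U1 a + U2 a).
Proof.
move=> [LU1 mono1 app1 [B1 HB1]] [LU2 mono2 app2 [B2 HB2]]; split.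
- by move=> a a01; have := LU1 a a01; have := LU2 a a01; lra.
- move=> a b a0 ab b1; have := mono1 a b a0 ab b1; have := mono2 a b a0 ab b1.
  lra.
- move=> a /[dup] a01 /andP[_ a1] e e0; have e2 : 0 < e / 2 by rewrite divr_gt0.
  have [b1 [b10 b1a l1 h1]] := app1 a a01 _ e2.
  have [b2 [b20 b2a l2 h2]] := app2 a a01 _ e2.
  have [b12|b21] := leP b1 b2.
  + have := mono1 b1 b2 b10 b12 (le_trans (ltW b2a) a1).
    by exists b2; split => //; lra.
  + have := mono2 b2 b1 b20 (ltW b21) (le_trans (ltW b1a) a1).
    by exists b1; split => //; lra.
- exists (B1 + B2) => a a01; have := HB1 a a01; have := HB2 a a01.
  by split; rewrite (le_trans (ler_normD _ _)) //; lra.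
Qed.

Lemma endpoint_familyZ c L U : 0 < c -> endpoint_family L U ->
  endpoint_family (fun a => c * L a) (fun a => c * U a).
Proof.
move=> c0 [LU mono app [B HB]]; split.
- by move=> a a01; rewrite ler_pM2l // LU.
- by move=> a b a0 ab b1; have [h1 h2] := mono a b a0 ab b1; rewrite !ler_pM2l.
- move=> a a01 e e0; have ec : 0 < e / c by rewrite divr_gt0.
  have [b [b0 ba l1 h1]] := app a a01 _ ec; exists b; split => //.
  + have : c * (L a - e / c) < c * L b by rewrite ltr_pM2l.
    by rewrite mulrBr mulrCA divff ?mulr1 // gt_eqF.
  + have : c * U b < c * (U a + e / c) by rewrite ltr_pM2l.
    by rewrite mulrDr mulrCA divff ?mulr1 // gt_eqF.
- exists (c * B) => a a01; have [h1 h2] := HB a a01.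
  by rewrite !normrM (gtr0_norm c0) !ler_pM2l.
Qed.

Lemma endpoint_family0 : endpoint_family (fun=> 0) (fun=> 0).
Proof.
split => //; last by exists 0 => a _; rewrite normr0.
move=> a /andP[a0 _] e e0; exists (a / 2); split; lra.
Qed.

Lemma fuzzy_of_endpoints_level L U : endpoint_family L U ->
  forall a, 0 < a <= 1 ->
  forall x, a <= fuzzy_of_endpoints L U x <-> L a <= x <= U a.
Proof.
move=> [_ mono app _] a /[dup] a01 /andP[a0 _] x; rewrite /fuzzy_of_endpoints.
set S := [set b | _]; have uS : has_ubound S by exists 1 => y [/andP[]].
split => [aS|xa]; last exact: ub_le_sup.
have S0 : S !=set0.
  by apply/set0P/negP => /eqP S0; move: aS; rewrite S0 sup0; lra.
(* levels of S just below a contradict the left continuity of L or U at a *)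
apply/andP; split; rewrite leNgt; apply/negP => xa.
- move: (app a a01 (L a - x)); rewrite subr_gt0 => /(_ xa) [b [b0 ba hb _]].
  have [c [/andP[_ c1] /andP[c2 _]] bc] := sup_gt S0 (lt_le_trans ba aS).
  have [m _] := mono b c b0 (ltW bc) c1; lra.
- move: (app a a01 (x - U a)); rewrite subr_gt0 => /(_ xa) [b [b0 ba _ hb]].
  have [c [/andP[_ c1] /andP[_ c3]] bc] := sup_gt S0 (lt_le_trans ba aS).
  have [_ m] := mono b c b0 (ltW bc) c1; lra.
Qed.

Lemma level_endpoints w L U a : 0 < a <= 1 -> L a <= U a ->
  (forall x, a <= w x <-> L a <= x <= U a) -> lo w a = L a /\ hi w a = U a.
Proof.
by move=> /andP[a0 _] LU Hw; rewrite /lo /hi level_gt0E //; exact: inf_sup_itvcc.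
Qed.

Lemma eq_endpoint_family L U L' U' :
  (forall a, 0 < a <= 1 -> L' a = L a /\ U' a = U a) ->
  endpoint_family L U -> endpoint_family L' U'.
Proof.
move=> E [LU mono app [B HB]]; split.
- by move=> a a01; have [-> ->] := E a a01; exact: LU.
- move=> a b a0 ab b1.
  have a01 : 0 < a <= 1 by rewrite a0 (le_trans ab b1).
  have b01 : 0 < b <= 1 by rewrite (lt_le_trans a0 ab) b1.
  by have [-> ->] := E a a01; have [-> ->] := E b b01; exact: mono.
- move=> a a01 e e0; have [b [b0 ba l h]] := app a a01 e e0.
  have b01 : 0 < b <= 1 by rewrite b0 (le_trans (ltW ba)) //; case/andP: a01.
  by exists b; have [-> ->] := E a a01; have [-> ->] := E b b01.
- by exists B => a a01; have [-> ->] := E a a01; exact: HB.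
Qed.

Lemma fuzzy_interval_of_endpoints L U : endpoint_family L U ->
  fuzzy_interval (fuzzy_of_endpoints L U) /\ forall a, 0 < a <= 1 ->
    lo (fuzzy_of_endpoints L U) a = L a /\ hi (fuzzy_of_endpoints L U) a = U a.
Proof.
move=> /[dup] LUe [LU _ _ _].
have E a (a01 : 0 < a <= 1) :=
  level_endpoints a01 (LU a a01) (fuzzy_of_endpoints_level LUe a01).
split => //; split; last exact: eq_endpoint_family E LUe.
by move=> a a01 x; have [-> ->] := E a a01; exact: fuzzy_of_endpoints_level.
Qed.

Lemma faddE u v : fuzzy_interval u -> fuzzy_interval v ->
  fadd u v = fuzzy_of_endpoints (fun a => lo u a + lo v a) (fun a => hi u a + hi v a).
Proof.
move=> [u1 [u2 _ _ _]] [v1 [v2 _ _ _]]; apply/funext => x.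
rewrite /fadd /fuzzy_of_endpoints; congr sup; apply/seteqP.
split => b /= [/[dup] b01 /andP[b0 _]]; rewrite /msum !level_gt0E // => H; split => //.
- move: H => [y [z [/(u1 b b01) /andP[y1 y2] /(v1 b b01) /andP[z1 z2] ->]]].
  by apply/andP; split; lra.
- have := u2 b b01; have := v2 b b01; case/andP: H => H1 H2 lv lu.
  have [c|c] := leP (lo u b) (x - hi v b).
  + exists (x - hi v b), (hi v b); split; last by rewrite subrK.
    * by apply/(u1 b b01); apply/andP; split; lra.
    * by apply/(v1 b b01); apply/andP; split; lra.
  + exists (lo u b), (x - lo u b); split; last by rewrite addrC subrK.
    * by apply/(u1 b b01); apply/andP; split; lra.
    * by apply/(v1 b b01); apply/andP; split; lra.
Qed.

Lemma fscaleE c u : 0 < c -> fuzzy_interval u ->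
  fscale c u = fuzzy_of_endpoints (fun a => c * lo u a) (fun a => c * hi u a).
Proof.
move=> c0 [u1 _]; apply/funext => x.
rewrite /fscale /fuzzy_of_endpoints; congr sup; apply/seteqP.
split => b /= [/[dup] b01 /andP[b0 _]]; rewrite /mscale !level_gt0E // => H; split => //.
- by move: H => [y /(u1 b b01) /andP[y1 y2] ->]; rewrite !ler_pM2l // y1 y2.
- exists (x / c); last by rewrite mulrCA divff ?mulr1 // gt_eqF.
  apply/(u1 b b01); case/andP: H => H1 H2.
  by rewrite ler_pdivlMr // ler_pdivrMr // ![_ * c]mulrC H1 H2.
Qed.

Lemma fzeroE : @fzero R = fuzzy_of_endpoints (fun=> 0) (fun=> 0).
Proof.
apply/funext => x; rewrite /fzero /fuzzy_of_endpoints /=.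
set S := [set b | _]; case: eqP => [x0|/eqP x0].
- have S1 : S 1 by rewrite /S /= x0 ltr01 !lexx.
  have uS : ubound S 1 by move=> b [/andP[]].
  by apply/eqP; rewrite eq_le ge_sup ?ub_le_sup //; [exists 1 | exists 1].
- suff -> : S = set0 by rewrite sup0.
  by apply/seteqP; split => // b [_]; rewrite -eq_le eq_sym (negbTE x0).
Qed.

Lemma fuzzy_interval_fadd u v : fuzzy_interval u -> fuzzy_interval v ->
  fuzzy_interval (fadd u v) /\ forall a, 0 < a <= 1 ->
    lo (fadd u v) a = lo u a + lo v a /\ hi (fadd u v) a = hi u a + hi v a.
Proof.
move=> /[dup] Fu [_ Eu] /[dup] Fv [_ Ev]; rewrite faddE //.
exact/fuzzy_interval_of_endpoints/endpoint_familyD.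
Qed.

Lemma fuzzy_interval_fscale c u : 0 < c -> fuzzy_interval u ->
  fuzzy_interval (fscale c u) /\ forall a, 0 < a <= 1 ->
    lo (fscale c u) a = c * lo u a /\ hi (fscale c u) a = c * hi u a.
Proof.
move=> c0 /[dup] Fu [_ Eu]; rewrite fscaleE //.
exact/fuzzy_interval_of_endpoints/endpoint_familyZ.
Qed.

Lemma fuzzy_interval_fzero : fuzzy_interval (@fzero R) /\ forall a, 0 < a <= 1 ->
  lo (@fzero R) a = 0 /\ hi (@fzero R) a = 0.
Proof. rewrite fzeroE; exact/fuzzy_interval_of_endpoints/endpoint_family0. Qed.

Lemma level_intervals_nested w : level_intervals w ->
  (forall a, 0 < a <= 1 -> lo w a <= hi w a) ->
  forall a b, 0 < a -> a <= b -> b <= 1 -> lo w a <= lo w b /\ hi w b <= hi w a.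
Proof.
move=> Hw LU a b a0 ab b1.
have a01 : 0 < a <= 1 by rewrite a0 (le_trans ab b1).
have b01 : 0 < b <= 1 by rewrite (lt_le_trans a0 ab) b1.
have /(Hw b b01) wlo : lo w b <= lo w b <= hi w b by rewrite lexx LU.
have /(Hw b b01) whi : lo w b <= hi w b <= hi w b by rewrite lexx LU.
have /(Hw a a01) /andP[-> _] : a <= w (lo w b) by apply: le_trans wlo.
by have /(Hw a a01) /andP[_ ->] : a <= w (hi w b) by apply: le_trans whi.
Qed.

Lemma level_intervals_approx w : (forall x, 0 <= w x) -> level_intervals w ->
  (forall a, 0 < a <= 1 -> lo w a <= hi w a) ->
  forall a, 0 < a <= 1 -> forall e, 0 < e -> exists b,
    [/\ 0 < b, b < a, lo w a - e < lo w b & hi w b < hi w a + e].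
Proof.
move=> w0 Hw LU a /[dup] a01 /andP[a0 a1] e e0.
have mono := level_intervals_nested Hw LU.
have below z : (forall b, 0 < b -> b < a -> lo w b <= z <= hi w b) ->
    lo w a <= z <= hi w a.
  move=> hz; apply/(Hw a a01); rewrite leNgt; apply/negP => za.
  have wz0 := w0 z.
  have b01 : 0 < (w z + a) / 2 <= 1 by apply/andP; split; lra.
  have : (w z + a) / 2 <= w z by apply/(Hw _ b01); apply: hz; lra.
  lra.
have [b1 [b10 b1a lb1]] : exists b, [/\ 0 < b, b < a & lo w a - e < lo w b].
  apply: contrapT => nb.
  suff /andP[] : lo w a <= lo w a - e <= hi w a by lra.
  apply: below => b b0 ba; rewrite leNgt; apply/andP; split.
  - by apply/negP => eb; apply: nb; exists b.
  - have [_ m] := mono b a b0 (ltW ba) a1; have := LU a a01; lra.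
have [b2 [b20 b2a hb2]] : exists b, [/\ 0 < b, b < a & hi w b < hi w a + e].
  apply: contrapT => nb.
  suff /andP[] : lo w a <= hi w a + e <= hi w a by lra.
  apply: below => b b0 ba; apply/andP; split.
  - have [m _] := mono b a b0 (ltW ba) a1; have := LU a a01; lra.
  - by rewrite leNgt; apply/negP => eb; apply: nb; exists b.
have [b12|b21] := leP b1 b2.
- have := mono b1 b2 b10 b12 (le_trans (ltW b2a) a1).
  by exists b2; split => //; lra.
- have := mono b2 b1 b20 (ltW b21) (le_trans (ltW b1a) a1).
  by exists b1; split => //; lra.
Qed.

Lemma fuzzy_support_bounded u : is_fuzzy_number u ->
  exists B, forall x, 0 < u x -> `|x| <= B.
Proof.
case=> _ _ _ _ /compact_bounded [M [_ HM]].
by exists (M + 1) => x ux; apply: (HM (M + 1)); [lra | exact: subset_closure].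
Qed.

Lemma fuzzy_level_intervals u : is_fuzzy_number u -> level_intervals u.
Proof.
move=> /[dup] fu [_ [x1 ux1] conv ucl _]; have [B HB] := fuzzy_support_bounded fu.
move=> a /andP[a0 a1] x; rewrite /lo /hi level_gt0E //.
set A := [set y | a <= u y].
have A0 : A !=set0 by exists x1; rewrite /A /= ux1.
have AB y : A y -> `|y| <= B by move=> Ay; apply: HB; exact: lt_le_trans a0 Ay.
have lA : has_lbound A by exists (- B) => y /AB; rewrite ler_norml => /andP[].
have uA : has_ubound A by exists B => y /AB; rewrite ler_norml => /andP[].
have Ai : A (inf A) := ucl a _ (closure_inf A0 lA).
have As : A (sup A) := ucl a _ (closure_sup A0 uA).
split => [Ax|/andP[h1 h2]].
  by apply/andP; split; [exact: ge_inf | exact: ub_le_sup].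
have [e|ne] := eqVneq (inf A) (sup A).
  by have -> : x = inf A by apply/eqP; rewrite eq_le h1 e h2.
have d0 : 0 < sup A - inf A by rewrite subr_gt0 lt_neqAle ne (le_trans h1 h2).
pose l := (sup A - x) / (sup A - inf A).
have l01 : 0 <= l <= 1.
  by apply/andP; split; [apply: divr_ge0; lra | rewrite /l ler_pdivrMr // mul1r; lra].
have -> : x = l * inf A + (1 - l) * sup A by rewrite /l; field; rewrite gt_eqF.
by apply: le_trans (conv _ _ _ l01); rewrite le_min; apply/andP.
Qed.

Lemma fuzzy_number_interval u : is_fuzzy_number u -> fuzzy_interval u.
Proof.
move=> /[dup] fu [u01 [x1 ux1] _ _ _]; have Hu := fuzzy_level_intervals fu.
have [B HB] := fuzzy_support_bounded fu.
have LU a : 0 < a <= 1 -> lo u a <= hi u a.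
  move=> /[dup] a01 /andP[_ a1].
  have /(Hu a a01 x1) /andP[h h'] : a <= u x1 by rewrite ux1.
  exact: le_trans h h'.
have u0 x : 0 <= u x by case/andP: (u01 x).
split => //; split => //.
- exact: level_intervals_nested.
- exact: level_intervals_approx.
- exists B => a /[dup] a01 /andP[a0 _]; split; apply: HB.
  + by apply: lt_le_trans a0 _; apply/(Hu a a01); rewrite lexx LU.
  + by apply: lt_le_trans a0 _; apply/(Hu a a01); rewrite lexx LU.
Qed.

(* Level 0 is the closure of the support, which [level_intervals] does not see. *)
Lemma fuzzy_interval_bound0 w C : fuzzy_interval w ->
  (forall a, 0 < a <= 1 -> `|lo w a| <= C /\ `|hi w a| <= C) ->
  `|lo w 0| <= C /\ `|hi w 0| <= C.
Proof.
move=> [Hw [LU _ _ _]] HC; set A := [set x | 0 < w x].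
have AC : closure A `<=` `[- C, C]%classic.
  rewrite [X in _ `<=` X](closure_id _).1; last exact: interval_closed.
  apply: closureS => x /= wx; rewrite in_itv /= -ler_norml.
  pose b := Num.min (w x) 1.
  have b01 : 0 < b <= 1 by rewrite lt_min wx ltr01 ge_min lexx orbT.
  have /(Hw b b01) /andP[h1 h2] : b <= w x by rewrite ge_min lexx.
  have [/ler_normlP[? ?] /ler_normlP[? ?]] := HC b b01.
  by rewrite ler_norml; apply/andP; split; lra.
have inC y : closure A y -> - C <= y <= C by move/AC; rewrite /= in_itv.
have o1 : 0 < (1 : R) <= 1 by rewrite ltr01 lexx.
have A0 : closure A !=set0.
  exists (lo w 1); apply: subset_closure; rewrite /A /=.
  have : 1 <= w (lo w 1) by apply/(Hw 1 o1); rewrite lexx LU.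
  lra.
have [y Ay] := A0.
have lA : has_lbound (closure A) by exists (- C) => z /inC /andP[].
have uA : has_ubound (closure A) by exists C => z /inC /andP[].
have iC : - C <= inf (closure A) by apply: lb_le_inf A0 _ => z /inC /andP[].
have sC : sup (closure A) <= C by apply: ge_sup A0 _ => z /inC /andP[].
have iy := ge_inf lA Ay; have ys := ub_le_sup uA Ay; have /andP[yl yu] := inC y Ay.
rewrite /lo /hi /level eqxx -/A.
by split; rewrite ler_norml; apply/andP; split; lra.
Qed.

Lemma fuzzy_interval_bound w C : fuzzy_interval w ->
  (forall a, 0 < a <= 1 -> `|lo w a| <= C /\ `|hi w a| <= C) ->
  forall a, 0 <= a <= 1 -> `|lo w a| <= C /\ `|hi w a| <= C.
Proof.
move=> Fw HC a /andP[a0 a1]; have [->|an0] := eqVneq a 0.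
  exact: fuzzy_interval_bound0.
by apply: HC; rewrite lt_neqAle eq_sym an0 a0 a1.
Qed.

Lemma fdist_le w z C : (forall a, 0 <= a <= 1 ->
  `|lo w a - lo z a| <= C /\ `|hi w a - hi z a| <= C) -> fdist w z <= C.
Proof.
move=> H; apply: ge_sup.
  by exists (Num.max `|lo w 0 - lo z 0| `|hi w 0 - hi z 0|), 0; rewrite // lexx ler01.
by move=> d [a a01 ->]; have [h1 h2] := H a a01; rewrite ge_max h1 h2.
Qed.

Lemma fdist_ge w z a : fuzzy_interval w -> fuzzy_interval z -> 0 <= a <= 1 ->
  `|lo w a - lo z a| <= fdist w z /\ `|hi w a - hi z a| <= fdist w z.
Proof.
move=> /[dup] Fw [_ [_ _ _ [Bw HBw]]] /[dup] Fz [_ [_ _ _ [Bz HBz]]] a01.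
have Cw := fuzzy_interval_bound Fw HBw; have Cz := fuzzy_interval_bound Fz HBz.
have ub : has_ubound [set d | exists2 a, 0 <= a <= 1 &
    d = Num.max `|lo w a - lo z a| `|hi w a - hi z a|].
  exists (Bw + Bz) => d [b b01 ->].
  have [w1 w2] := Cw b b01; have [z1 z2] := Cz b b01.
  by rewrite ge_max; apply/andP; split; rewrite (le_trans (ler_normB _ _)) //; lra.
have := ub_le_sup ub (ex_intro2 _ _ a a01 erefl).
by rewrite ge_max => /andP[h1 h2]; split; [exact: le_trans h1 | exact: le_trans h2].
Qed.

Lemma endpoints_le_fdist w z a e B : fuzzy_interval w -> fuzzy_interval z ->
  0 <= a <= 1 -> fdist w z <= e -> `|lo z a| <= B /\ `|hi z a| <= B ->
  `|lo w a| <= e + B /\ `|hi w a| <= e + B.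
Proof.
move=> Fw Fz a01 we [zl zh]; have [wl wh] := fdist_ge Fw Fz a01.
have := ler_normD (lo w a - lo z a) (lo z a).
have := ler_normD (hi w a - hi z a) (hi z a).
by rewrite !subrK; split; lra.
Qed.

Lemma fdist_fzero_le w C : fuzzy_interval w ->
  (forall a, 0 < a <= 1 -> `|lo w a| <= C /\ `|hi w a| <= C) -> fdist w fzero <= C.
Proof.
move=> Fw HC; have [F0 E0] := fuzzy_interval_fzero.
have B0 (a : R) : 0 < a <= 1 -> `|lo fzero a| <= 0 /\ `|hi fzero a| <= 0.
  by move=> a01; have [-> ->] := E0 a a01; rewrite normr0.
apply: fdist_le => a a01.
have [w1 w2] := fuzzy_interval_bound Fw HC a01.
have [z1 z2] := fuzzy_interval_bound F0 B0 a01.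
by split; apply: le_trans (ler_normB _ _) _; lra.
Qed.
End fuzzy_endpoints.

Section euler_weights.
Variables (R : realType) (p : R).

Definition euler_weight n k : R := 'C(n, k)%:R * p ^+ (n - k) / (p + 1) ^+ n.

Definition euler_transform (s : nat -> R) n :=
  \sum_(k < n.+1) euler_weight n k * s k.

Definition partial_sum (x : nat -> R) n := \sum_(k < n.+1) x k.

Lemma binomial_mass n : \sum_(k < n.+1) 'C(n, k)%:R * p ^+ (n - k) = (p + 1) ^+ n.
Proof. by rewrite exprDn; apply: eq_bigr => k _; rewrite expr1n mulr1 mulr_natl. Qed.

Lemma binomial_moment_shift n (f : nat -> R) :
  \sum_(k < n.+2) (k%:R * f k) * ('C(n.+1, k)%:R * p ^+ (n.+1 - k)) =
  n.+1%:R * \sum_(j < n.+1) f j.+1 * ('C(n, j)%:R * p ^+ (n - j)).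
Proof.
rewrite big_ord_recl /= !mul0r add0r mulr_sumr; apply: eq_bigr => j _.
rewrite /bump /= add1n subSS.
have e : (j.+1%:R * 'C(n.+1, j.+1)%:R : R) = n.+1%:R * 'C(n, j)%:R.
  by rewrite -!natrM mul_bin_diag.
transitivity ((j.+1%:R * 'C(n.+1, j.+1)%:R) * (f j.+1 * p ^+ (n - j))); first ring.
by rewrite e; ring.
Qed.

Lemma binomial_first_moment n :
  \sum_(k < n.+1) k%:R * ('C(n, k)%:R * p ^+ (n - k)) = n%:R * (p + 1) ^+ n.-1.
Proof.
case: n => [|n]; first by rewrite big_ord1 /= !mul0r.
have := binomial_moment_shift n (fun _ => 1); under eq_bigr do rewrite mulr1.
by move=> ->; under eq_bigr do rewrite mul1r; rewrite binomial_mass.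
Qed.

Lemma binomial_second_factorial_moment n :
  \sum_(k < n.+1) (k%:R * (k%:R - 1)) * ('C(n, k)%:R * p ^+ (n - k)) =
  n%:R * (n%:R - 1) * (p + 1) ^+ n.-2.
Proof.
case: n => [|n]; first by rewrite big_ord1 /= !mul0r.
rewrite (binomial_moment_shift n (fun k => k%:R - 1)).
under eq_bigr do rewrite -addn1 natrD addrK.
by rewrite binomial_first_moment -addn1 natrD addrK mulrA addn1.
Qed.

Hypothesis p_gt0 : 0 < p.

Lemma euler_weight_gt0 n k : (k <= n)%N -> 0 < euler_weight n k.
Proof.
move=> kn; have p1 : 0 < p + 1 by rewrite addr_gt0.
by rewrite divr_gt0 ?mulr_gt0 ?exprn_gt0 ?ltr0n ?bin_gt0.
Qed.

Lemma euler_weight_sum n : \sum_(k < n.+1) euler_weight n k = 1.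
Proof.
by rewrite -mulr_suml binomial_mass divff // expf_neq0 // gt_eqF // addr_gt0.
Qed.

(* Bias-variance decomposition for the Binomial(n, 1 / (p + 1)) distribution. *)
Lemma euler_weight_second_moment n (m : R) :
  \sum_(k < n.+1) euler_weight n k * (k%:R - m) ^+ 2 =
  n%:R * p / (p + 1) ^+ 2 + (n%:R / (p + 1) - m) ^+ 2.
Proof.
have p1 : p + 1 != 0 by rewrite gt_eqF // addr_gt0.
have pn : (p + 1) ^+ n != 0 by rewrite expf_neq0.
transitivity ((\sum_(k < n.+1) ((k%:R * (k%:R - 1)) * ('C(n, k)%:R * p ^+ (n - k))
   + (1 - 2 * m) * (k%:R * ('C(n, k)%:R * p ^+ (n - k)))
   + m ^+ 2 * ('C(n, k)%:R * p ^+ (n - k)))) / (p + 1) ^+ n).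
  by rewrite mulr_suml; apply: eq_bigr => k _; rewrite /euler_weight; field.
rewrite !big_split /= -!mulr_sumr binomial_mass binomial_first_moment.
rewrite binomial_second_factorial_moment.
by case: n pn => [|[|n]] pn /=; rewrite ?expr0 ?expr1 ?exprS; field;
  rewrite ?expf_neq0 ?andbT //; exact: p1.
Qed.

Lemma euler_weight_spread n m : n%:R <= m%:R * (p + 1) -> m%:R * (p + 1) < n.+1%:R ->
  \sum_(k < n.+1) euler_weight n k * (k%:R - m%:R) ^+ 2 <= m%:R + 1.
Proof.
move=> nm mn; rewrite euler_weight_second_moment.
have p0 := p_gt0; have p1 : 0 < p + 1 by rewrite addr_gt0.
set y := n%:R / (p + 1).
have ym : y <= m%:R by rewrite ler_pdivrMr.
have my : m%:R - 1 < y.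
  rewrite ltr_pdivlMr //; move: mn; rewrite -natr1; lra.
have : n%:R * p / (p + 1) ^+ 2 <= y.
  have -> : n%:R * p / (p + 1) ^+ 2 = y * (p / (p + 1)).
    by rewrite /y; field; rewrite gt_eqF.
  apply: ler_piMr; first by rewrite divr_ge0 ?ler0n ?ltW.
  rewrite ler_pdivrMr //; lra.
have : 0 <= y by rewrite divr_ge0 ?ler0n ?ltW.
nra.
Qed.
End euler_weights.

Section real_bounds.
Variable R : realType.

Lemma le_sqrt_increment (M y : R) l : 0 <= M -> Num.sqrt l.+1%:R * `|y| <= M ->
  `|y| <= 2 * M * (Num.sqrt l.+1%:R - Num.sqrt l%:R).
Proof.
move=> M0; set s := Num.sqrt _; set t := Num.sqrt _ => h.
have st : s ^+ 2 = t ^+ 2 + 1 by rewrite !sqr_sqrtr ?ler0n // -natr1.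
have s0 : 0 < s by rewrite sqrtr_gt0 ltr0n.
have t0 : 0 <= t by rewrite sqrtr_ge0.
(* (s - t) (s + t) = 1 and s + t <= 2 s *)
have k : 1 <= 2 * s * (s - t).
  have -> : 2 * s * (s - t) = (s - t) ^+ 2 + (s ^+ 2 - t ^+ 2) by ring.
  rewrite st; have := sqr_ge0 (s - t); lra.
rewrite -(ler_pM2l s0); apply: le_trans h _.
have -> : s * (2 * M * (s - t)) = M * (2 * s * (s - t)) by ring.
by rewrite ler_peMr.
Qed.

Lemma twice_dist_le (s t : R) : 0 <= s -> 0 < t ->
  2 * `|s - t| <= 1 + (s ^+ 2 - t ^+ 2) ^+ 2 / t ^+ 2.
Proof.
move=> s0 t0.
have h : (s - t) ^+ 2 <= (s ^+ 2 - t ^+ 2) ^+ 2 / t ^+ 2.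
  rewrite ler_pdivlMr ?exprn_gt0 //.
  have -> : (s ^+ 2 - t ^+ 2) ^+ 2 = (s - t) ^+ 2 * (s + t) ^+ 2 by ring.
  apply: ler_wpM2l; first exact: sqr_ge0.
  rewrite -subr_ge0; have -> : (s + t) ^+ 2 - t ^+ 2 = s * (s + 2 * t) by ring.
  by apply: mulr_ge0 => //; lra.
have : 2 * `|s - t| <= 1 + `|s - t| ^+ 2 by have := sqr_ge0 (`|s - t| - 1); nra.
rewrite real_normK ?num_real //; lra.
Qed.

Lemma eventually_bounded (f : nat -> R) M0 : (\forall n \near \oo, `|f n| <= M0) ->
  exists2 M, 0 <= M & forall n, `|f n| <= M.
Proof.
case=> N _ HN; exists (`|M0| + \sum_(j < N) `|f j|).
  by rewrite addr_ge0 ?sumr_ge0.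
move=> n; have [nN|Nn] := ltnP n N.
- have : `|f n| <= \sum_(j < N) `|f j|.
    by rewrite (bigD1 (Ordinal nN)) //= lerDl sumr_ge0.
  by have := normr_ge0 M0; lra.
- have := HN n Nn; have := ler_norm M0.
  have : 0 <= \sum_(j < N) `|f j| by rewrite sumr_ge0.
  lra.
Qed.
End real_bounds.

Section tauberian.
Variables (R : realType) (p : R) (x : nat -> R) (M : R).
Hypotheses (p_gt0 : 0 < p) (M_ge0 : 0 <= M)
  (x_bound : forall k, (0 < k)%N -> Num.sqrt k%:R * `|x k| <= M).

Lemma partial_sum_increment j t : `|partial_sum x (j + t) - partial_sum x j| <=
  2 * M * (Num.sqrt (j + t)%:R - Num.sqrt j%:R).
Proof.
elim: t => [|t IH]; first by rewrite addn0 !subrr normr0 mulr0.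
rewrite addnS /partial_sum big_ord_recr /= -/(partial_sum x (j + t)).
have := le_sqrt_increment M_ge0 (x_bound (ltn0Sn (j + t))).
rewrite addrAC; move: IH; set d := partial_sum x _ - _ => IH h.
by apply: le_trans (ler_normD _ _) _; lra.
Qed.

Lemma partial_sum_dist m k : (0 < m)%N ->
  `|partial_sum x m - partial_sum x k| <= M * (1 + (k%:R - m%:R) ^+ 2 / m%:R).
Proof.
move=> m0; have sm : 0 < Num.sqrt (m%:R : R) by rewrite sqrtr_gt0 ltr0n.
have := twice_dist_le (sqrtr_ge0 (k%:R : R)) sm.
rewrite !sqr_sqrtr ?ler0n // => /(ler_wpM2l M_ge0); rewrite mulrA (mulrC M).
have sqrt_le i j : (i <= j)%N -> 0 <= Num.sqrt (j%:R : R) - Num.sqrt i%:R.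
  by move=> ij; rewrite subr_ge0 ler_sqrt ?ler0n // ler_nat.
apply: le_trans; have [km|mk] := leqP k m.
- rewrite [X in _ * X]distrC (ger0_norm (sqrt_le _ _ km)).
  by have := partial_sum_increment k (m - k); rewrite subnKC // distrC.
- rewrite distrC (ger0_norm (sqrt_le _ _ (ltnW mk))).
  by have := partial_sum_increment m (k - m); rewrite subnKC // ltnW.
Qed.

Lemma norm_term_le k : (0 < k)%N -> `|x k| <= M.
Proof.
move=> k0; apply: le_trans (x_bound k0); rewrite ler_peMl //.
by rewrite -[X in X <= _]sqrtr1 ler_sqrt // ler1n.
Qed.

Lemma norm_partial_sum_le m : `|partial_sum x m| <= `|x 0| + m%:R * M.
Proof.
rewrite /partial_sum big_ord_recl; apply: le_trans (ler_normD _ _) _; rewrite lerD2l.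
apply: le_trans (ler_norm_sum _ _ _) _.
have -> : m%:R * M = \sum_(i < m) M by rewrite sumr_const card_ord mulr_natl.
by apply: ler_sum => i _; apply: norm_term_le.
Qed.

Lemma partial_sum_euler_dist m n : (0 < m)%N ->
  n%:R <= m%:R * (p + 1) -> m%:R * (p + 1) < n.+1%:R ->
  `|partial_sum x m - euler_transform p (partial_sum x) n| <= 3 * M.
Proof.
move=> m0 nm mn; have mr0 : (0 : R) < m%:R by rewrite ltr0n.
rewrite /euler_transform -[partial_sum x m]mul1r -(euler_weight_sum p_gt0 n).
rewrite mulr_suml -sumrB; apply: le_trans (ler_norm_sum _ _ _) _.
apply: (@le_trans _ _ (\sum_(k < n.+1) (M * euler_weight p n k +
    M / m%:R * (euler_weight p n k * (k%:R - m%:R) ^+ 2)))).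
  apply: ler_sum => k _; have w0 := ltW (euler_weight_gt0 p_gt0 (leq_ord k)).
  rewrite -mulrBr normrM ger0_norm //.
  have -> : M * euler_weight p n k + M / m%:R * (euler_weight p n k * (k%:R - m%:R) ^+ 2)
      = euler_weight p n k * (M * (1 + (k%:R - m%:R) ^+ 2 / m%:R)).
    by field; rewrite gt_eqF.
  by rewrite ler_wpM2l ?partial_sum_dist.
rewrite big_split /= -!mulr_sumr euler_weight_sum // mulr1.
have := ler_wpM2l (divr_ge0 M_ge0 (ltW mr0)) (euler_weight_spread p_gt0 nm mn).
rewrite mulrDr divfK ?gt_eqF // mulr1.
have : M / m%:R <= M by rewrite ler_pdivrMr // ler_peMr // ler1n.
lra.
Qed.

Lemma norm_partial_sum_bounded K N :
  (forall n, (N <= n)%N -> `|euler_transform p (partial_sum x) n| <= K) ->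
  forall m, `|partial_sum x m| <= `|x 0| + K + (N + 3)%:R * M.
Proof.
move=> hT m; have K0 : 0 <= K := le_trans (normr_ge0 _) (hT N (leqnn N)).
have NM : 0 <= N%:R * M by rewrite mulr_ge0 ?ler0n.
have x0 := normr_ge0 (x 0); have := M_ge0; rewrite natrD mulrDl => M0.
have [/andP[Nm m0]|] := boolP ((N <= m)%N && (0 < m)%N); last first.
  rewrite negb_and -ltnNge lt0n negbK => /orP mN.
  have mN' : (m <= N)%N by case: mN => [/ltnW //|/eqP ->].
  have : m%:R * M <= N%:R * M by rewrite ler_wpM2r // ler_nat.
  have := norm_partial_sum_le m; lra.
have mq : 0 <= m%:R * (p + 1) by rewrite mulr_ge0 ?ler0n // addr_ge0 // ltW.
set n := Num.truncn (m%:R * (p + 1)).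
have /andP[nm mn] := truncn_itv mq.
have mn' : (m <= n)%N by rewrite truncn_ge_nat // ler_peMr ?ler0n // lerDr ltW.
have := partial_sum_euler_dist m0 nm mn; have := hT n (leq_trans Nm mn').
set s := partial_sum x m; set t := euler_transform _ _ _ => ht hst.
have := ler_normD (s - t) t; rewrite subrK; lra.
Qed.
End tauberian.

Section fuzzy_series.
Variable R : realType.
Implicit Types (u : nat -> R -> R) (w z : R -> R).

Lemma fuzzy_interval_big (I : Type) (r : seq I) (P : pred I) (F : I -> R -> R) a :
  0 < a <= 1 -> (forall i, fuzzy_interval (F i)) ->
  [/\ fuzzy_interval (\big[fadd/fzero]_(i <- r | P i) F i),
      lo (\big[fadd/fzero]_(i <- r | P i) F i) a = \sum_(i <- r | P i) lo (F i) a &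
      hi (\big[fadd/fzero]_(i <- r | P i) F i) a = \sum_(i <- r | P i) hi (F i) a].
Proof.
move=> a01 FF.
apply: (big_ind3 (fun w l h => [/\ fuzzy_interval w, lo w a = l & hi w a = h])).
- by have [F0 /(_ a a01) [-> ->]] := @fuzzy_interval_fzero R.
- move=> w1 l1 h1 w2 l2 h2 [F1 <- <-] [F2 <- <-].
  by have [Fw /(_ a a01) [-> ->]] := fuzzy_interval_fadd F1 F2.
- by move=> i _.
Qed.

Lemma fuzzy_interval_psum u n a : 0 < a <= 1 -> (forall k, fuzzy_interval (u k)) ->
  [/\ fuzzy_interval (psum u n),
      lo (psum u n) a = partial_sum (fun k => lo (u k) a) n &
      hi (psum u n) a = partial_sum (fun k => hi (u k) a) n].
Proof.
by move=> a01 Fu; apply: (fuzzy_interval_big _ _ (F := fun k : 'I_n.+1 => u k) a01).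
Qed.

Lemma fuzzy_interval_euler_mean (p : R) u n a : 0 < p -> 0 < a <= 1 ->
  (forall k, fuzzy_interval (u k)) ->
  [/\ fuzzy_interval (euler_mean p (psum u) n),
      lo (euler_mean p (psum u) n) a =
        euler_transform p (partial_sum (fun k => lo (u k) a)) n &
      hi (euler_mean p (psum u) n) a =
        euler_transform p (partial_sum (fun k => hi (u k) a)) n].
Proof.
move=> p0 a01 Fu; rewrite /euler_mean -/(euler_weight p n _).
have Fs k : fuzzy_interval (psum u k) by case: (fuzzy_interval_psum k a01 Fu).
have Fk (k : 'I_n.+1) := fuzzy_interval_fscale (euler_weight_gt0 p0 (leq_ord k)) (Fs k).
have [Ft -> ->] := fuzzy_interval_big (index_enum 'I_n.+1) xpredT a01 (fun k => (Fk k).1).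
split => //; apply: eq_bigr => k _.
- by have [_ /(_ a a01) [-> _]] := Fk k; have [_ -> _] := fuzzy_interval_psum k a01 Fu.
- by have [_ /(_ a a01) [_ ->]] := Fk k; have [_ _ ->] := fuzzy_interval_psum k a01 Fu.
Qed.

Lemma psum_endpoints_bounded (p : R) u nu M N B : 0 < p ->
  (forall k, fuzzy_interval (u k)) -> fuzzy_interval nu -> 0 <= M ->
  (forall k, Num.sqrt k%:R * fdist (u k) fzero <= M) ->
  (forall n, (N <= n)%N -> fdist (euler_mean p (psum u) n) nu <= 1) ->
  (forall a, 0 <= a <= 1 -> `|lo nu a| <= B /\ `|hi nu a| <= B) ->
  exists C, forall m a, 0 < a <= 1 ->
    `|lo (psum u m) a| <= C /\ `|hi (psum u m) a| <= C.
Proof.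
move=> p0 Fu Fnu M0 HM HN HB.
exists (fdist (u 0) fzero + (1 + B) + (N + 3)%:R * M) => m a /[dup] a01 /andP[a0 a1].
set C := _ + _ + _.
have a01' : 0 <= a <= 1 by rewrite ltW.
have bounded x : (forall k, `|x k| <= fdist (u k) fzero) ->
    (forall n, (N <= n)%N -> `|euler_transform p (partial_sum x) n| <= 1 + B) ->
    `|partial_sum x m| <= C.
  move=> hx hT; apply: le_trans (norm_partial_sum_bounded p0 M0 _ hT m) _.
    by move=> k _; apply: le_trans (HM k); rewrite ler_wpM2l ?sqrtr_ge0.
  by rewrite /C !lerD2r.
have [F0 E0] := @fuzzy_interval_fzero R.
have [z1 z2] : `|lo (@fzero R) a| <= 0 /\ `|hi (@fzero R) a| <= 0.
  by have [-> ->] := E0 a a01; rewrite normr0.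
have dk k := endpoints_le_fdist (Fu k) F0 a01' (lexx _) (conj z1 z2).
have [_ -> ->] := fuzzy_interval_psum m a01 Fu.
split; apply: bounded => [k|n Nn].
- by have [+ _] := dk k; rewrite addr0.
- have [Ft <- _] := fuzzy_interval_euler_mean n p0 a01 Fu.
  by have [] := endpoints_le_fdist Ft Fnu a01' (HN n Nn) (HB a a01').
- by have [_] := dk k; rewrite addr0.
- have [Ft _ <-] := fuzzy_interval_euler_mean n p0 a01 Fu.
  by have [] := endpoints_le_fdist Ft Fnu a01' (HN n Nn) (HB a a01').
Qed.
End fuzzy_series.

Theorem mainTheorem2 (R : realType) (p : R) (u : nat -> R -> R) (nu : R -> R) :
  0 < p ->
  (forall n, is_fuzzy_number (u n)) ->
  is_fuzzy_number nu ->
  Ep_summable_series p u nu ->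
  (exists M : R, \forall n \near \oo,
      `|Num.sqrt (n%:R : R) * fdist (u n) fzero| <= M) ->
  in_bs u.
Proof.
move=> p0 fu fnu Esum [M0 HM0].
have Fu k : fuzzy_interval (u k) := fuzzy_number_interval (fu k).
have Fnu := fuzzy_number_interval fnu; have [_ [_ _ _ [B HB]]] := Fnu.
have [M M_ge0 HM] := eventually_bounded HM0.
move: Esum => /cvgrPdist_le /(_ 1 ltr01) [N _ HN].
have HN' n : (N <= n)%N -> fdist (euler_mean p (psum u) n) nu <= 1.
  by move=> /HN; rewrite /= sub0r normrN; apply: le_trans (ler_norm _).
have [C HC] := psum_endpoints_bounded p0 Fu Fnu M_ge0
  (fun k => le_trans (ler_norm _) (HM k)) HN' (fuzzy_interval_bound Fnu HB).
exists (`|C| + 1) => [|m]; first by rewrite ltr_pwDr.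
have o1 : 0 < (1 : R) <= 1 by rewrite ltr01 lexx.
have [Fs _ _] := fuzzy_interval_psum m o1 Fu.
by apply: le_lt_trans (fdist_fzero_le Fs (HC m)) _; rewrite ltr_pwDr // ler_norm.
Qed.
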